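(* Let $\mathcal{P}$ be a finite set of atomic propositions, let $u \in (2^{\mathcal{P}})^\ast$, $v \in (2^{\mathcal{P}})^+$, let $\rho$ be a regular expression, and let $m$ be the number of states of the minimal deterministic finite automaton over the alphabet $2^{\mathcal{P}}$ recognizing $L(\rho)$. Suppose $uv^\omega[i,j) \vdash \rho$ for some $i, j \in \mathbb{N}$ with $i \le |u| < j$. Then there exists $k \in \mathbb{N}$ with $|u| \le k \le |u| + m|v|$ such that $uv^\omega[i,k) \vdash \rho$ and $k \equiv j \pmod{|v|}$.
   Context: For a word $\alpha = a_0a_1\ldots$ and $i\le j$, $\alpha[i,j) = a_i\ldots a_{j-1}$ and $\alpha[i]=a_i$; $uv^\omega = uvvv\ldots$. Regular expressions: atomic expressions $\xi ::= p \in \mathcal{P} \mid \lnot \xi \mid \xi \lor \xi$, with $[\![p]\!] = \{A \subseteq \mathcal{P} : p \in A\}$, $[\![\lnot\xi]\!] = 2^{\mathcal{P}} \setminus [\![\xi]\!]$, $[\![\xi_1 \lor \xi_2]\!] = [\![\xi_1]\!] \cup [\![\xi_2]\!]$. Regular expressions $\rho ::= \varepsilon \mid \xi \mid \rho + \rho \mid \rho \circ \rho \mid \rho^\ast$. Matching relation on infixes of a word $w$: $w[i,j) \vdash \varepsilon$ iff $j=i$; $w[i,j) \vdash \xi$ iff $j=i+1$ and $w[i] \in [\![\xi]\!]$; $w[i,j)\vdash \rho_1+\rho_2$ iff $w[i,j)\vdash\rho_1$ or $w[i,j)\vdash\rho_2$; $w[i,j)\vdash \rho_1\circ\rho_2$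 iff there is $k\in\{i,\ldots,j\}$ with $w[i,k)\vdash\rho_1$ and $w[k,j)\vdash\rho_2$; $w[i,j)\vdash\rho^\ast$ iff $j=i$ or there is $k\in\{i+1,\ldots,j\}$ with $w[i,k)\vdash\rho$ and $w[k,j)\vdash\rho^\ast$. $L(\rho) = \{ w \in (2^{\mathcal{P}})^\ast : w[0,|w|) \vdash \rho\}$. *)

From mathcomp Require Import all_boot.
Set Implicit Arguments. Unset Strict Implicit. Unset Printing Implicit Defensive.

Inductive atomic (P : finType) : Type :=
| AProp of P
| ANot of atomic P
| AOr of atomic P & atomic P.

Fixpoint atom_sem (P : finType) (xi : atomic P) (A : {set P}) : bool :=
  match xi with
  | AProp p => p \in A
  | ANot x => ~~ atom_sem x A
  | AOr x y => atom_sem x A || atom_sem y A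
  end.

Inductive regex (P : finType) : Type :=
| REps
| RAtom of atomic P
| RPlus of regex P & regex P
| RCat of regex P & regex P
| RStar of regex P.

Inductive star_rel (R : nat -> nat -> Prop) : nat -> nat -> Prop :=
| star_nil i : star_rel R i i
| star_cons i k j : i < k -> k <= j -> R i k -> star_rel R k j -> star_rel R i j.

(* matches w r i j  <->  w[i,j) |- r, for a (possibly infinite) word w : nat -> 2^P *)
Fixpoint matches (P : finType) (w : nat -> {set P}) (r : regex P) : nat -> nat -> Prop :=
  match r with
  | REps => fun i j => j = i
  | RAtom xi => fun i j => j = i.+1 /\ atom_sem xi (w i)
  | RPlus r1 r2 => fun i j => matches w r1 i j \/ matches w r2 i j
  | RCat r1 r2 => fun i j => exists k, [/\ i <= k, k <= j, matches w r1 i k & matches w r2 k j]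
  | RStar r1 => star_rel (matches w r1)
  end.

(* finite word as a function (positions beyond |w| are never inspected by matches 0 |w|) *)
Definition fword (P : finType) (w : seq {set P}) : nat -> {set P} := fun n => nth set0 w n.

Definition lang (P : finType) (r : regex P) (w : seq {set P}) : Prop :=
  matches (fword w) r 0 (size w).

Definition uvomega (P : finType) (u v : seq {set P}) : nat -> {set P} :=
  fun n => if n < size u then nth set0 u n else nth set0 v ((n - size u) %% size v).

Record dfa (A : finType) := DFA {
  dstate : finType;
  dinit : dstate;
  dtrans : dstate -> A -> dstate;
  dacc : pred dstate }.

Definition dfa_accepts (A : finType) (D : dfa A) (w : seq A) : bool :=
  @dacc A D (foldl (@dtrans A D) (@dinit A D) w).

Definition dfa_recognizes (A : finType) (D : dfa A) (L : seq A -> Prop) : Prop :=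
  forall w, dfa_accepts D w <-> L w.

Definition min_dfa_size (A : finType) (L : seq A -> Prop) (m : nat) : Prop :=
  (exists D : dfa A, dfa_recognizes D L /\ #|@dstate A D| = m) /\
  (forall D : dfa A, dfa_recognizes D L -> m <= #|@dstate A D|).

From mathcomp Require Import all_boot zify.

(* Read u v^omega from position i with an m-state DFA for L(rho).  Beyond |u|
   the word is |v|-periodic, so along the positions k = a + t|v|, with
   a = |u| + (j - |u|) mod |v|, the state reached after w[i,k) is g^t(q0) for a
   single state map g; and the t-th iterate of a map on m states already occurs
   among its first m iterates. *)

Set Implicit Arguments.
Unset Strict Implicit.
Unset Printing Implicit Defensive.

Definition infix (T : Type) (w : nat -> T) (a b : nat) : seq T := map w (iota a (b - a)).

Lemma size_infix (T : Type) (w : nat -> T) a b : size (infix w a b) = b - a.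
Proof. by rewrite size_map size_iota. Qed.

Lemma nth_infix (T : Type) (x0 : T) (w : nat -> T) a b n :
  n < b - a -> nth x0 (infix w a b) n = w (a + n).
Proof. by move=> lt_n; rewrite (nth_map 0) ?size_iota // nth_iota. Qed.

Lemma infix_cat (T : Type) (w : nat -> T) a b c :
  a <= b -> b <= c -> infix w a c = infix w a b ++ infix w b c.
Proof.
move=> le_ab le_bc; rewrite /infix -map_cat -[in iota b _](subnKC le_ab) -iotaD.
by congr (map w (iota a _)); lia.
Qed.

Lemma infix_shift (T : Type) (w : nat -> T) a b s :
  (forall n, a <= n < b -> w (s + n) = w n) -> infix w (s + a) (s + b) = infix w a b.
Proof.
move=> w_shift; rewrite /infix subnDl iotaDl -map_comp.
by apply/eq_in_map => n; rewrite mem_iota => /andP[? ?] /=; apply: w_shift; lia.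
Qed.

Section Matches.

Variable P : finType.

Lemma matches_transfer (w w' : nat -> {set P}) r a b a' :
  (forall n, n < b - a -> w (a + n) = w' (a' + n)) ->
  matches w r a b -> matches w' r a' (a' + (b - a)).
Proof.
elim: r a b a' => [|xi|r1 IH1 r2 IH2|r1 IH1 r2 IH2|r1 IH1] a b a' eq_w /=.
- by move=> ->; rewrite subnn addn0.
- case=> eq_b sem_xi; subst b; rewrite subSnn addn1; split=> //.
  by rewrite -(addn0 a') -eq_w ?addn0 ?subSnn.
- by case=> [/IH1|/IH2] M; [left|right]; apply: M.
- case=> k [le_ak le_kb M1 M2]; exists (a' + (k - a)); split; [lia|lia| |].
  + by apply: IH1 M1 => n lt_n; apply: eq_w; lia.
  + have -> : a' + (b - a) = a' + (k - a) + (b - k) by lia.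
    apply: IH2 M2 => n lt_n; rewrite -addnA -eq_w; [congr w|]; lia.
- move=> star_ab; elim: star_ab a' eq_w => [i|i k j lt_ik le_kj M _ IH] a' eq_w.
    by rewrite subnn addn0; apply: star_nil.
  apply: (@star_cons _ _ (a' + (k - i))); [lia|lia| |].
  + by apply: IH1 M => n lt_n; apply: eq_w; lia.
  + have -> : a' + (j - i) = a' + (k - i) + (j - k) by lia.
    apply: IH => n lt_n; rewrite -addnA -eq_w; [congr w|]; lia.
Qed.

Lemma matches_lang (w : nat -> {set P}) r a b :
  a <= b -> matches w r a b <-> lang r (infix w a b).
Proof.
rewrite /lang size_infix => le_ab; split => M.
- by rewrite -[b - a]add0n; apply: matches_transfer M => n lt_n; rewrite /fword nth_infix.
- have := matches_transfer (a' := a) _ M; rewrite subn0 subnKC //; apply.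
  by move=> n lt_n; rewrite /fword nth_infix.
Qed.

End Matches.

Lemma uvomega_periodic (P : finType) (u v : seq {set P}) c n :
  size u <= n -> uvomega u v (c * size v + n) = uvomega u v n.
Proof.
move=> le_un; rewrite /uvomega ltnNge (leq_trans le_un (leq_addl _ _)) ltnNge le_un /=.
by rewrite -addnBA // modnMDl.
Qed.

Lemma iter_lt_card (T : finType) (f : T -> T) x n :
  exists2 n', n' < #|T| & iter n' f x = iter n f x.
Proof.
have conn := fconnect_iter f n x.
exists (findex f x (iter n f x)); last exact: iter_findex.
exact: leq_trans (findex_max conn) (max_card _).
Qed.

Section EventuallyPeriodicWord.

Variables (A : finType) (D : dfa A) (w : nat -> A) (N V : nat).
Hypothesis w_periodic : forall c n, N <= n -> w (c * V + n) = w n.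

Local Notation run q a b := (foldl (@dtrans A D) q (infix w a b)).

Lemma infix_periodic c a b : N <= a -> infix w (c * V + a) (c * V + b) = infix w a b.
Proof.
by move=> le_Na; apply: infix_shift => n /andP[le_an _]; apply/w_periodic/(leq_trans le_Na).
Qed.

Lemma run_periodic q i a t : i <= a -> N <= a ->
  run q i (t * V + a) = iter t (fun p => run p a (V + a)) (run q i a).
Proof.
move=> le_ia le_Na; elim: t => [|t IH] /=; first by rewrite add0n.
rewrite mulSnr -addnA (@infix_cat _ _ _ (t * V + a)) ?foldl_cat ?IH ?infix_periodic //.
  exact: leq_trans le_ia (leq_addl _ _).
by rewrite leq_add2l leq_addl.
Qed.

Lemma run_pumping q i a t : i <= a -> N <= a ->
  exists2 t', t' < #|dstate D| & run q i (t' * V + a) = run q i (t * V + a).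
Proof.
move=> le_ia le_Na.
have [t' lt_t' eq_iter] := iter_lt_card (fun p => run p a (V + a)) (run q i a) t.
by exists t' => //; rewrite !run_periodic.
Qed.

Lemma dfa_accepts_periodic_cut i j : 0 < V -> i <= N -> N <= j ->
  dfa_accepts D (infix w i j) ->
  exists k, [/\ N <= k <= N + #|dstate D| * V, dfa_accepts D (infix w i k) & k = j %[mod V]].
Proof.
move=> V_gt0 le_iN le_Nj acc_j.
set a := N + (j - N) %% V.
have j_eq : j = (j - N) %/ V * V + a by rewrite /a addnCA -divn_eq subnKC.
have [t' lt_t' eq_run] := @run_pumping (dinit D) i a ((j - N) %/ V)
  (leq_trans le_iN (leq_addr _ _)) (leq_addr _ _).
exists (t' * V + a); split.
- have := ltn_pmod (j - N) V_gt0; have := leq_mul lt_t' (leqnn V).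
  rewrite mulSn /a; lia.
- by rewrite /dfa_accepts eq_run -j_eq.
- by rewrite j_eq !modnMDl.
Qed.

End EventuallyPeriodicWord.

Theorem lemma2 (P : finType) (u v : seq {set P}) (rho : regex P) (m i j : nat) :
  0 < size v ->
  min_dfa_size (lang rho) m ->
  i <= size u < j ->
  matches (uvomega u v) rho i j ->
  exists k : nat,
    [/\ size u <= k <= size u + m * size v,
        matches (uvomega u v) rho i k
      & k = j %[mod size v]].
Proof.
move=> v_gt0 [[D [D_lang <-]] _] /andP[le_iu /ltnW le_uj] match_ij.
have acc_ij : dfa_accepts D (infix (uvomega u v) i j).
  by apply/D_lang; apply/(matches_lang _ _ (leq_trans le_iu le_uj)).
have [k [/andP[le_uk le_k] acc_ik eq_k]] :=
  dfa_accepts_periodic_cut (@uvomega_periodic P u v) v_gt0 le_iu le_uj acc_ij.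
exists k; split => //; first by rewrite le_uk.
by apply/(matches_lang _ _ (leq_trans le_iu le_uk)); apply/D_lang.
Qed.
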